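(* Let $X \subset Y \subset \mathbb{R}^{n}$ be finite sets, let $k \geq 0$ be an integer and $r > 0$, and suppose that $X^{k+1}_{dis}$ is $r$-dense in $Y^{k+1}_{dis}$. Let $0 = s_{0} < s_{1} < \dots < s_{m}$ be the phase-change numbers of $Y$, and let $0 \le i < m$ be such that $2r < s_{i+1} - s_{i}$. Then the inclusion $i: L_{s_{i},k}(X) \to L_{s_{i},k}(Y)$ is a weak homotopy equivalence.
   Context: $\mathbb{R}^n$ carries the Euclidean metric $d$. For subsets $A \subset B$ of a metric space and $r>0$, $A$ is $r$-dense in $B$ if for every $b \in B$ there is an $a \in A$ with $d(a,b) < r$. For a finite $X \subset \mathbb{R}^n$ and $s \ge 0$, $V_{s}(X)$ is the Vietoris–Rips complex: vertex set $X$, simplices the nonempty subsets $\{x_0,\dots,x_p\}$ with $d(x_i,x_j) \le s$ for all $i,j$. For an integer $k \geq 0$, the Lesnick complex $L_{s,k}(X)$ is the full subcomplex of $V_{s}(X)$ on the set of vertices $x \in X$ for which there exist at least $k$ points $x' \in X$, distinct from $x$, with $d(x,x') \leq s$. $X^{k+1}_{dis}$ denotes the set of ordered $(k+1)$-tuples of pairwise distinct points of $X$, regarded as a subset of $\mathbb{R}^{n(k+1)}$ with its Euclidean metric. The phase-change numbers of $Y$ are the distinct values of $d(y,y')$, $y,y' \in Y$, listed as $0 = s_{0} < \dots < s_{m}$. A simplicial map is a weak homotopy equivalence if its geometric realization is a homotopy equivalence. *)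

From Stdlib Require Import Reals List.
From Stdlib Require Fin.
Open Scope R_scope.

(** Points of R^n: coordinate functions on Fin.t n (equality via funext). *)
Definition point (n : nat) := Fin.t n -> R.

Fixpoint fsum (n : nat) : (Fin.t n -> R) -> R :=
  match n with
  | 0%nat => fun _ => 0
  | S m => fun f => f Fin.F1 + fsum m (fun i => f (Fin.FS i))
  end.

Definition dist (n : nat) (x y : point n) : R :=
  sqrt (fsum n (fun i => (x i - y i) ^ 2)).

Definition tdist (n k : nat) (x y : Fin.t (S k) -> point n) : R :=
  sqrt (fsum (S k) (fun j => fsum n (fun i => (x j i - y j i) ^ 2))).

Definition finite_set {T : Type} (A : T -> Prop) : Prop :=
  exists l : list T, forall x, A x <-> In x l.

Definition dense_dis (n k : nat) (X Y : point n -> Prop) (r : R) : Prop :=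
  forall y : Fin.t (S k) -> point n,
    (forall j, Y (y j)) -> (forall j j', j <> j' -> y j <> y j') ->
    exists x : Fin.t (S k) -> point n,
      (forall j, X (x j)) /\ (forall j j', j <> j' -> x j <> x j') /\
      tdist n k x y < r.

Definition phase_change (n : nat) (Y : point n -> Prop) (m : nat) (s : nat -> R) : Prop :=
  s 0%nat = 0 /\
  (forall j, (j < m)%nat -> s j < s (S j)) /\
  (forall j, (j <= m)%nat -> exists y y', Y y /\ Y y' /\ dist n y y' = s j) /\
  (forall y y', Y y -> Y y' -> exists j, (j <= m)%nat /\ dist n y y' = s j).

(** An (abstract) simplicial complex on vertices in R^n: a predicate on
    vertex sets (simplices). *)
Definition complex (n : nat) := (point n -> Prop) -> Prop.

Definition VR (n : nat) (s : R) (X : point n -> Prop) : complex n :=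
  fun sigma =>
    (exists x, sigma x) /\ (forall x, sigma x -> X x) /\
    (forall x y, sigma x -> sigma y -> dist n x y <= s).

Definition lesnick_vertex (n : nat) (s : R) (k : nat) (X : point n -> Prop)
  (x : point n) : Prop :=
  X x /\ exists l : list (point n), length l = k /\ NoDup l /\
    forall x', In x' l -> X x' /\ x' <> x /\ dist n x x' <= s.

Definition lesnick (n : nat) (s : R) (k : nat) (X : point n -> Prop) : complex n :=
  fun sigma => VR n s X sigma /\ forall x, sigma x -> lesnick_vertex n s k X x.

(** Geometric realization: barycentric coordinate functions t, nonnegative,
    with finite support which is a simplex, summing to 1. *)
Definition bary (n : nat) := point n -> R.

Definition realization (n : nat) (K : complex n) : bary n -> Prop :=
  fun t =>
    (forall v, 0 <= t v) /\ K (fun v => t v <> 0) /\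
    exists l : list (point n), NoDup l /\ (forall v, t v <> 0 <-> In v l) /\
      fold_right Rplus 0 (map t l) = 1.

(** Metric on realizations whose vertices all lie in the finite list V
    (the l1 norm on R^V; induces the standard topology of the realization). *)
Definition bdist (n : nat) (V : list (point n)) (t t' : bary n) : R :=
  fold_right Rplus 0 (map (fun v => Rabs (t v - t' v)) V).

Definition cont_on (n : nat) (V : list (point n)) (A : bary n -> Prop)
  (g : bary n -> bary n) : Prop :=
  forall t, A t -> forall eps, eps > 0 -> exists del, del > 0 /\
    forall t', A t' -> bdist n V t t' < del -> bdist n V (g t) (g t') < eps.

Definition homotopy_on (n : nat) (V : list (point n)) (A : bary n -> Prop)
  (H : R -> bary n -> bary n) : Prop :=
  (forall u t, 0 <= u <= 1 -> A t -> A (H u t)) /\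
  forall u t, 0 <= u <= 1 -> A t -> forall eps, eps > 0 -> exists del, del > 0 /\
    forall u' t', 0 <= u' <= 1 -> A t' ->
      Rabs (u - u') + bdist n V t t' < del -> bdist n V (H u t) (H u' t') < eps.

Definition incl_homotopy_equivalence (n : nat) (V : list (point n))
  (A B : bary n -> Prop) : Prop :=
  (forall t, A t -> B t) /\
  exists g : bary n -> bary n,
    (forall t, B t -> A (g t)) /\ cont_on n V B g /\
    (exists H, homotopy_on n V A H /\
       forall t, A t -> H 0 t = t /\ H 1 t = g t) /\
    (exists H, homotopy_on n V B H /\
       forall t, B t -> H 0 t = t /\ H 1 t = g t).

(** The inclusion simplicial map K -> L (vertices among V) is a weak homotopy
    equivalence: its geometric realization is a homotopy equivalence. *)
Definition weak_he_incl (n : nat) (V : list (point n)) (K L : complex n) : Prop :=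
  incl_homotopy_equivalence n V (realization n K) (realization n L).

(** Write s = s_i.  Since 2r is smaller than the gap s_{i+1} - s_i,
    no distance between points of Y lies in (s, s + 2r) ([phase_change_gap]).
    Density of X^{k+1}_dis in Y^{k+1}_dis then moves every Lesnick vertex y of
    L_{s,k}(Y), together with its k witnesses, by less than r onto a Lesnick
    vertex f(y) of L_{s,k}(X): pairwise distances grow to less than s + 2r and
    the gap brings them back below s ([lesnick_vertex_approx]).  Pushing
    barycentric weights along f gives a map g : |L(Y)| -> |L(X)|, and the
    straight-line homotopy between the identity and g stays inside |L(X)| and
    |L(Y)| respectively, again because all vertices involved are pairwise
    closer than s + 2r ([slh_realization]).  It is Lipschitz, hence continuous
    ([slh_lipschitz]), so g is a homotopy inverse of the inclusion. *)
From Stdlib Require Import Reals List FinFun Arith Lra Lia Psatz ClassicalEpsilon FunctionalExtensionality.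
From Stdlib Require Fin.
Open Scope R_scope.

Lemma fsum_ext n (f g : Fin.t n -> R) : (forall i, f i = g i) -> fsum n f = fsum n g.
Proof.
  revert f g; induction n as [|n IH]; intros f g H; simpl; [reflexivity|].
  rewrite H, (IH (fun i => f (Fin.FS i)) (fun i => g (Fin.FS i))); auto.
Qed.

Lemma fsum_lin n (f g : Fin.t n -> R) a b :
  fsum n (fun i => a * f i + b * g i) = a * fsum n f + b * fsum n g.
Proof.
  revert f g; induction n as [|n IH]; intros f g; simpl; [ring|].
  rewrite (IH (fun i => f (Fin.FS i)) (fun i => g (Fin.FS i))); ring.
Qed.

Lemma fsum_nonneg n (f : Fin.t n -> R) : (forall i, 0 <= f i) -> 0 <= fsum n f.
Proof.
  revert f; induction n as [|n IH]; intros f H; simpl; [lra|].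
  pose proof (IH (fun i => f (Fin.FS i)) (fun i => H (Fin.FS i))).
  pose proof (H Fin.F1); lra.
Qed.

Lemma fsum_ge_term n (j : Fin.t n) (f : Fin.t n -> R) :
  (forall i, 0 <= f i) -> f j <= fsum n f.
Proof.
  revert f; induction j as [n|n j IH]; intros f H; simpl.
  - pose proof (fsum_nonneg n (fun i => f (Fin.FS i)) (fun i => H (Fin.FS i))); lra.
  - pose proof (IH (fun i => f (Fin.FS i)) (fun i => H (Fin.FS i))).
    pose proof (H Fin.F1); lra.
Qed.

Lemma quadratic_discriminant A B C :
  0 <= B -> (forall l, 0 <= A + 2 * l * C + l ^ 2 * B) -> C ^ 2 <= A * B.
Proof.
  intros HB Hq. destruct (Rle_lt_or_eq_dec _ _ HB) as [Bpos|B0].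
  - specialize (Hq (- C / B)).
    replace (A + 2 * (- C / B) * C + (- C / B) ^ 2 * B) with ((A * B - C ^ 2) / B)
      in Hq by (field; lra).
    assert (0 <= (A * B - C ^ 2) / B * B) by (apply Rmult_le_pos; lra).
    replace ((A * B - C ^ 2) / B * B) with (A * B - C ^ 2) in H by (field; lra). lra.
  - subst B. destruct (Req_dec C 0) as [C0|Cn]; [subst C; lra|].
    specialize (Hq (- (A + 1) / (2 * C))).
    replace (A + 2 * (- (A + 1) / (2 * C)) * C + (- (A + 1) / (2 * C)) ^ 2 * 0) with (-1)
      in Hq by (field; auto). lra.
Qed.

(** Cauchy-Schwarz, via the discriminant of l |-> sum (a_i + l b_i)^2. *)
Lemma cauchy_schwarz n (a b : Fin.t n -> R) :
  (fsum n (fun i => a i * b i)) ^ 2 <=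
  fsum n (fun i => a i ^ 2) * fsum n (fun i => b i ^ 2).
Proof.
  apply quadratic_discriminant.
  - apply fsum_nonneg; intro; apply pow2_ge_0.
  - intro l.
    replace (_ + _ + _) with (fsum n (fun i => (a i + l * b i) ^ 2)).
    + apply fsum_nonneg; intro; apply pow2_ge_0.
    + rewrite (fsum_ext _ _ (fun i => 1 * a i ^ 2 + 1 * (2 * l * (a i * b i) + l ^ 2 * b i ^ 2)))
        by (intro; ring).
      rewrite fsum_lin, (fsum_lin n (fun i => a i * b i)); ring.
Qed.

Lemma dist_triangle n (x y z : point n) : dist n x z <= dist n x y + dist n y z.
Proof.
  unfold dist.
  set (a := fun i => x i - y i). set (b := fun i => y i - z i).
  set (A := fsum n (fun i => a i ^ 2)). set (B := fsum n (fun i => b i ^ 2)).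
  set (C := fsum n (fun i => a i * b i)).
  assert (HA : 0 <= A) by (apply fsum_nonneg; intro; apply pow2_ge_0).
  assert (HB : 0 <= B) by (apply fsum_nonneg; intro; apply pow2_ge_0).
  assert (Hsum : fsum n (fun i => (x i - z i) ^ 2) = A + 2 * C + B).
  { rewrite (fsum_ext _ _ (fun i => 1 * a i ^ 2 + 1 * (2 * (a i * b i) + 1 * b i ^ 2)))
      by (intro; unfold a, b; ring).
    rewrite fsum_lin, (fsum_lin n (fun i => a i * b i)); unfold A, B, C; ring. }
  assert (HC : C <= sqrt A * sqrt B).
  { rewrite <- sqrt_mult_alt by exact HA.
    eapply Rle_trans; [apply Rle_abs|]. rewrite <- sqrt_Rsqr_abs.
    apply sqrt_le_1_alt. unfold Rsqr. replace (C * C) with (C ^ 2) by ring.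
    apply cauchy_schwarz. }
  change (sqrt (fsum n (fun i => (x i - z i) ^ 2)) <= sqrt A + sqrt B).
  rewrite Hsum. pose proof (sqrt_pos A). pose proof (sqrt_pos B).
  rewrite <- (sqrt_pow2 (sqrt A + sqrt B)) by lra. apply sqrt_le_1_alt.
  pose proof (sqrt_sqrt A HA). pose proof (sqrt_sqrt B HB). nra.
Qed.

Lemma dist_sym n (x y : point n) : dist n x y = dist n y x.
Proof. unfold dist; f_equal; apply fsum_ext; intro; ring. Qed.

Lemma dist_refl n (x : point n) : dist n x x = 0.
Proof.
  unfold dist. rewrite (fsum_ext _ _ (fun i => 0 * x i + 0 * x i)) by (intro; ring).
  rewrite fsum_lin, Rmult_0_l, Rplus_0_l; apply sqrt_0.
Qed.

Lemma dist_le_tdist n k (x y : Fin.t (S k) -> point n) j :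
  dist n (x j) (y j) <= tdist n k x y.
Proof.
  apply sqrt_le_1_alt.
  apply (fsum_ge_term _ j (fun j => fsum n (fun i => (x j i - y j i) ^ 2))).
  intro; apply fsum_nonneg; intro; apply pow2_ge_0.
Qed.

Definition lsum {A : Type} (h : A -> R) (l : list A) : R := fold_right Rplus 0 (map h l).

Section ListSums.
Context {A : Type}.
Implicit Types (h : A -> R) (l L : list A).

Lemma lsum_app h l1 l2 : lsum h (l1 ++ l2) = lsum h l1 + lsum h l2.
Proof. unfold lsum; rewrite map_app; induction l1; simpl; [ring|]; rewrite IHl1; ring. Qed.

Lemma lsum_nonneg h l : (forall v, 0 <= h v) -> 0 <= lsum h l.
Proof. intro H; induction l as [|a l IH]; unfold lsum in *; simpl; [lra|]; specialize (H a); lra. Qed.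

Lemma lsum_lin h h' a b l :
  lsum (fun v => a * h v + b * h' v) l = a * lsum h l + b * lsum h' l.
Proof. induction l as [|x l IH]; unfold lsum in *; simpl; [ring|]; rewrite IH; ring. Qed.

Lemma lsum_le h h' l : (forall v, In v l -> h v <= h' v) -> lsum h l <= lsum h' l.
Proof.
  induction l as [|a l IH]; intro H; unfold lsum in *; simpl; [lra|].
  pose proof (H a (or_introl eq_refl)). pose proof (IH (fun v Hv => H v (or_intror Hv))). lra.
Qed.

Lemma lsum_ext_in h h' l : (forall v, In v l -> h v = h' v) -> lsum h l = lsum h' l.
Proof. intro H; unfold lsum; f_equal; apply map_ext_in; exact H. Qed.

Lemma lsum_zero h l : (forall v, In v l -> h v = 0) -> lsum h l = 0.
Proof.
  intro H; rewrite (lsum_ext_in h (fun _ => 0 * 0 + 0 * 0) l) by (intros v Hv; rewrite H; auto; ring).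
  rewrite lsum_lin; ring.
Qed.

Lemma lsum_term h l v : (forall v, 0 <= h v) -> In v l -> h v <= lsum h l.
Proof.
  intros Hn Hv; induction l as [|a l IH]; [destruct Hv|].
  unfold lsum in *; simpl; destruct Hv as [<-|Hv].
  - pose proof (lsum_nonneg h l Hn); unfold lsum in *; lra.
  - specialize (IH Hv); specialize (Hn a); lra.
Qed.

Lemma lsum_nz h l : lsum h l <> 0 -> exists v, In v l /\ h v <> 0.
Proof.
  intros H; apply NNPP; intro Hno; apply H, lsum_zero; intros v Hv.
  apply NNPP; intro Hv0; apply Hno; eauto.
Qed.

Lemma lsum_abs h l : Rabs (lsum h l) <= lsum (fun v => Rabs (h v)) l.
Proof.
  induction l as [|a l IH]; unfold lsum in *; simpl; [rewrite Rabs_R0; lra|].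
  eapply Rle_trans; [apply Rabs_triang|]; lra.
Qed.

Lemma lsum_const_bound h l c : (forall v, In v l -> h v <= c) -> lsum h l <= INR (length l) * c.
Proof.
  intro H; eapply Rle_trans; [apply (lsum_le h (fun _ => c)); exact H|]; clear H.
  induction l as [|a l IH]; unfold lsum in *; cbn [length map fold_right]; [simpl; lra|].
  rewrite S_INR; lra.
Qed.

Lemma lsum_swap (F : A -> A -> R) l L :
  lsum (fun v => lsum (F v) L) l = lsum (fun w => lsum (fun v => F v w) l) L.
Proof.
  induction l as [|a l IH].
  - symmetry; apply lsum_zero; reflexivity.
  - unfold lsum at 1; simpl; fold (lsum (fun v => lsum (F v) L) l); rewrite IH.
    transitivity (lsum (fun w => 1 * F a w + 1 * lsum (fun v => F v w) l) L).
    + rewrite lsum_lin; ring.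
    + apply lsum_ext_in; intros; unfold lsum; simpl; ring.
Qed.

Lemma lsum_le_cover h L l : (forall v, 0 <= h v) -> NoDup L ->
  (forall v, In v L -> h v <> 0 -> In v l) -> lsum h L <= lsum h l.
Proof.
  intros Hn HL; revert l; induction HL as [|a L' Ha HL' IH]; intros l Hc.
  - apply lsum_nonneg; auto.
  - unfold lsum at 1; simpl; fold (lsum h L').
    destruct (Req_dec (h a) 0) as [E|E].
    + rewrite E, Rplus_0_l; apply IH; intros; apply Hc; simpl; auto.
    + destruct (in_split a l (Hc a (or_introl eq_refl) E)) as [l1 [l2 ->]].
      assert (Hrest : lsum h L' <= lsum h (l1 ++ l2)).
      { apply IH; intros v Hv Hv0.
        destruct (in_app_or _ _ _ (Hc v (or_intror Hv) Hv0)) as [H|[H|H]];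
          apply in_or_app; auto; subst; contradiction. }
      rewrite lsum_app in *; unfold lsum at 3; simpl; fold (lsum h l2); lra.
Qed.

Lemma lsum_eq_cover h l1 l2 : (forall v, 0 <= h v) -> NoDup l1 -> NoDup l2 ->
  (forall v, h v <> 0 -> In v l1) -> (forall v, h v <> 0 -> In v l2) ->
  lsum h l1 = lsum h l2.
Proof. intros; apply Rle_antisym; apply lsum_le_cover; auto. Qed.

End ListSums.

Lemma lsum_indicator {A : Type} (a : A) (c : R) (L : list A) : NoDup L -> In a L ->
  lsum (fun v => if excluded_middle_informative (a = v) then c else 0) L = c.
Proof.
  intro HL; induction HL as [|b L' Hb HL' IH]; intro Ha; [destruct Ha|].
  unfold lsum at 1; simpl; fold (lsum (fun v => if excluded_middle_informative (a = v) then c else 0) L').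
  destruct (excluded_middle_informative (a = b)) as [<-|ne].
  - rewrite lsum_zero; [ring|]; intros v Hv.
    destruct (excluded_middle_informative (a = v)); [subst; contradiction|reflexivity].
  - rewrite IH; [ring|]; destruct Ha as [E|Ha]; [congruence|exact Ha].
Qed.

Definition distance_gap (n : nat) (Y : point n -> Prop) (s w : R) : Prop :=
  forall a b, Y a -> Y b -> dist n a b < s + w -> dist n a b <= s.

Lemma phase_change_mono n Y m s a b : phase_change n Y m s ->
  (a <= b)%nat -> (b <= m)%nat -> s a <= s b.
Proof.
  intros [_ [Hinc _]] Hab; induction Hab as [|c Hac IH]; intro Hc; [lra|].
  pose proof (Hinc c ltac:(lia)); pose proof (IH ltac:(lia)); lra.
Qed.

Lemma phase_change_gap n Y m s i w : phase_change n Y m s -> (i < m)%nat ->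
  w <= s (S i) - s i -> distance_gap n Y (s i) w.
Proof.
  intros Hp Him Hw a b Ha Hb Hd.
  pose proof Hp as (_ & _ & _ & Hall).
  destruct (Hall a b Ha Hb) as [j [Hj Ej]]; rewrite Ej in *.
  destruct (le_lt_dec j i) as [Hji|Hij].
  - apply (phase_change_mono n Y m s); auto; lia.
  - pose proof (phase_change_mono n Y m s (S i) j Hp Hij Hj); lra.
Qed.

Lemma lesnick_vertex_mono n s k (X Y : point n -> Prop) v :
  (forall x, X x -> Y x) -> lesnick_vertex n s k X v -> lesnick_vertex n s k Y v.
Proof.
  intros HXY [Hv [l [Hl [Hnd Hin]]]]; split; [auto|].
  exists l; split; [exact Hl|]; split; [exact Hnd|].
  intros z Hz; destruct (Hin z Hz) as (? & ? & ?); auto.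
Qed.

Lemma lesnick_mono n s k (X Y : point n -> Prop) sigma :
  (forall x, X x -> Y x) -> lesnick n s k X sigma -> lesnick n s k Y sigma.
Proof.
  intros HXY [[Hne [HX Hd]] Hl]; split; [split; [exact Hne|split; auto]|].
  intros x Hx; apply lesnick_vertex_mono with X; auto.
Qed.

Lemma realization_mono n (K K' : complex n) t :
  (forall sigma, K sigma -> K' sigma) -> realization n K t -> realization n K' t.
Proof. intros HK [H1 [H2 H3]]; split; auto. Qed.

Section LesnickRealization.
Variables (n : nat) (s : R) (k : nat) (Z : point n -> Prop) (L : list (point n)).
Hypothesis L_nodup : NoDup L.
Hypothesis L_covers : forall v, Z v -> In v L.

Lemma realization_lesnick_elim t : realization n (lesnick n s k Z) t ->
  (forall v, 0 <= t v) /\ (forall v, t v <> 0 -> lesnick_vertex n s k Z v) /\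
  (forall a b, t a <> 0 -> t b <> 0 -> dist n a b <= s) /\
  (exists v, t v <> 0) /\ lsum t L = 1.
Proof.
  intros [Hnn [[[Hne [_ Hdiam]] Hlv] [l [Hnd [Hsupp Hsum]]]]].
  split; [exact Hnn|]; split; [exact Hlv|]; split; [exact Hdiam|]; split; [exact Hne|].
  transitivity (lsum t l); [|exact Hsum].
  apply lsum_eq_cover; auto.
  - intros v Hv; apply L_covers, (Hlv v Hv).
  - intros v Hv; apply Hsupp, Hv.
Qed.

Lemma realization_lesnick_intro t :
  (forall v, 0 <= t v) -> (forall v, t v <> 0 -> lesnick_vertex n s k Z v) ->
  (forall a b, t a <> 0 -> t b <> 0 -> dist n a b <= s) ->
  (exists v, t v <> 0) -> lsum t L = 1 ->
  realization n (lesnick n s k Z) t.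
Proof.
  intros Hnn Hlv Hdiam Hne Hsum.
  assert (HL : forall v, t v <> 0 -> In v L) by (intros v Hv; apply L_covers, (Hlv v Hv)).
  set (supp := filter (fun v => if Req_dec_T (t v) 0 then false else true) L).
  assert (Hsupp : forall v, t v <> 0 <-> In v supp).
  { intro v; unfold supp; rewrite filter_In.
    destruct (Req_dec_T (t v) 0) as [E|E]; split.
    - intro Hv; contradiction.
    - intros [_ F]; discriminate.
    - intro Hv; auto.
    - intros _; exact E. }
  split; [exact Hnn|]; split.
  - split; [split; [exact Hne|split; [|exact Hdiam]]|exact Hlv].
    intros x Hx; apply (Hlv x Hx).
  - exists supp; split; [apply NoDup_filter; exact L_nodup|]; split; [exact Hsupp|].
    change (lsum t supp = 1); rewrite <- Hsum.
    apply lsum_eq_cover; auto; [apply NoDup_filter; exact L_nodup|apply Hsupp].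
Qed.

End LesnickRealization.

Fixpoint fin_enum (k : nat) : list (Fin.t k) :=
  match k with 0%nat => nil | S k' => Fin.F1 :: map Fin.FS (fin_enum k') end.

Lemma fin_enum_length k : length (fin_enum k) = k.
Proof. induction k; simpl; rewrite ?length_map; auto. Qed.

Lemma fin_enum_nodup k : NoDup (fin_enum k).
Proof.
  induction k; simpl; constructor.
  - intro Hi; apply in_map_iff in Hi; destruct Hi as [j [E _]]; discriminate.
  - apply Injective_map_NoDup; auto; intros a b; apply Fin.FS_inj.
Qed.

Lemma tuple_of_list {A : Type} (k : nat) (y : A) (l : list A) :
  NoDup (y :: l) -> length l = k ->
  exists yt : Fin.t (S k) -> A,
    yt Fin.F1 = y /\ (forall j, In (yt (Fin.FS j)) l) /\
    (forall j j', j <> j' -> yt j <> yt j').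
Proof.
  intros Hnd Hlen.
  exists (fun j => nth (proj1_sig (Fin.to_nat j)) (y :: l) y); split; [reflexivity|]; split.
  - intro j; simpl; destruct (Fin.to_nat j) as [p Hp]; simpl; apply nth_In; lia.
  - intros j j' ne E; apply ne, Fin.to_nat_inj.
    destruct (Fin.to_nat j) as [p Hp], (Fin.to_nat j') as [q Hq]; simpl in *.
    apply (proj1 (NoDup_nth (y :: l) y) Hnd); simpl; auto; lia.
Qed.

Lemma list_of_tuple_tail {A : Type} (k : nat) (xt : Fin.t (S k) -> A) :
  (forall j j', j <> j' -> xt j <> xt j') ->
  let l := map (fun j => xt (Fin.FS j)) (fin_enum k) in
  length l = k /\ NoDup l /\
  (forall x, In x l -> x <> xt Fin.F1 /\ exists j, x = xt (Fin.FS j)).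
Proof.
  intros Hinj l; split; [|split].
  - unfold l; rewrite length_map; apply fin_enum_length.
  - apply Injective_map_NoDup; [|apply fin_enum_nodup].
    intros a b E; apply NNPP; intro ne; apply (Hinj (Fin.FS a) (Fin.FS b)); auto.
    intro E'; apply ne, Fin.FS_inj, E'.
  - intros x Hx; apply in_map_iff in Hx; destruct Hx as [j [<- _]]; split; eauto.
    apply Hinj; discriminate.
Qed.

(** Density of the configuration spaces moves every Lesnick vertex of [Y] by
    less than [r] to a Lesnick vertex of [X]: the [k + 1] points witnessing the
    vertex move together, and the gap keeps their mutual distances [<= s]. *)
Lemma lesnick_vertex_approx n k (X Y : point n -> Prop) r s y :
  (forall x, X x -> Y x) -> dense_dis n k X Y r -> distance_gap n Y s (2 * r) ->
  lesnick_vertex n s k Y y -> exists x, dist n y x < r /\ lesnick_vertex n s k X x.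
Proof.
  intros HXY Hdense Hgap [Yy [l [Hlen [Hnd Hl]]]].
  assert (Hnd' : NoDup (y :: l)).
  { constructor; auto; intro Hy; destruct (Hl y Hy) as [_ [ne _]]; auto. }
  destruct (tuple_of_list k y l Hnd' Hlen) as (yt & Hy1 & Hyl & Hyinj).
  assert (HYt : forall j, Y (yt j)).
  { intro j; apply (Fin.caseS' j); [rewrite Hy1; exact Yy|].
    intro j'; apply (Hl _ (Hyl j')). }
  destruct (Hdense yt HYt Hyinj) as [xt [HXt [Hxinj Htd]]].
  assert (Hclose : forall j, dist n (yt j) (xt j) < r).
  { intro j; rewrite dist_sym; eapply Rle_lt_trans; [apply dist_le_tdist|exact Htd]. }
  destruct (list_of_tuple_tail k xt Hxinj) as (Hlen' & Hnd'' & Htail).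
  exists (xt Fin.F1); split; [rewrite <- Hy1; apply Hclose|].
  split; [apply HXt|].
  eexists; split; [exact Hlen'|]; split; [exact Hnd''|].
  intros x Hx; destruct (Htail x Hx) as [ne [j ->]].
  split; [apply HXt|]; split; [intro E; apply ne, E|].
  apply Hgap; auto.
  assert (Hyj : dist n y (yt (Fin.FS j)) <= s) by apply (Hl _ (Hyl j)).
  pose proof (Hclose Fin.F1) as H1; pose proof (Hclose (Fin.FS j)) as H2.
  rewrite Hy1, dist_sym in H1.
  pose proof (dist_triangle n (xt Fin.F1) y (xt (Fin.FS j))).
  pose proof (dist_triangle n y (yt (Fin.FS j)) (xt (Fin.FS j))).
  lra.
Qed.

Lemma scale_abs c x : 0 <= c <= 1 -> Rabs (c * x) <= Rabs x.
Proof.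
  intro Hc; rewrite Rabs_mult, (Rabs_pos_eq c) by lra.
  pose proof (Rabs_pos x); nra.
Qed.

Lemma convex_comb_diff a a' b b' u u' :
  0 <= u <= 1 -> 0 <= u' <= 1 -> 0 <= a' <= 1 -> 0 <= b' <= 1 ->
  Rabs ((1 - u) * a + u * b - ((1 - u') * a' + u' * b'))
    <= Rabs (a - a') + Rabs (b - b') + 2 * Rabs (u - u').
Proof.
  intros Hu Hu' Ha' Hb'.
  replace ((1 - u) * a + u * b - ((1 - u') * a' + u' * b')) with
    ((1 - u) * (a - a') + u * (b - b') + a' * (u' - u) + b' * (u - u')) by ring.
  eapply Rle_trans; [apply Rabs_4|].
  pose proof (scale_abs (1 - u) (a - a') ltac:(lra)).
  pose proof (scale_abs u (b - b') Hu).
  pose proof (scale_abs a' (u' - u) Ha'); rewrite Rabs_minus_sym in H1.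
  pose proof (scale_abs b' (u - u') Hb').
  lra.
Qed.

Section StraightLineHomotopy.
Variables (n k : nat) (X Y : point n -> Prop) (lY L : list (point n)) (r s : R).
Variable f : point n -> point n.
Hypothesis lY_spec : forall y, Y y <-> In y lY.
Hypothesis L_nodup : NoDup L.
Hypothesis L_spec : forall y, Y y <-> In y L.
Hypothesis XY : forall x, X x -> Y x.
Hypothesis r_pos : 0 < r.
Hypothesis gap : distance_gap n Y s (2 * r).
Hypothesis f_near : forall y, lesnick_vertex n s k Y y ->
  dist n y (f y) < r /\ lesnick_vertex n s k X (f y).

Definition push (t : bary n) : bary n :=
  fun v => lsum (fun w => if excluded_middle_informative (f w = v) then t w else 0) L.

Definition slh (u : R) (t : bary n) : bary n := fun v => (1 - u) * t v + u * push t v.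

Lemma push_nonneg t v : (forall v, 0 <= t v) -> 0 <= push t v.
Proof.
  intro Hnn; apply lsum_nonneg; intro w.
  destruct (excluded_middle_informative _); [apply Hnn|lra].
Qed.

Lemma push_le_mass t v : (forall v, 0 <= t v) -> push t v <= lsum t L.
Proof.
  intro Hnn; apply lsum_le; intros w _.
  destruct (excluded_middle_informative _); [lra|apply Hnn].
Qed.

Lemma push_ge t w : (forall v, 0 <= t v) -> In w L -> t w <= push t (f w).
Proof.
  intros Hnn Hw; unfold push.
  replace (t w) with (if excluded_middle_informative (f w = f w) then t w else 0) at 1
    by (destruct (excluded_middle_informative _); congruence).
  apply (lsum_term (fun w' => if excluded_middle_informative (f w' = f w) then t w' else 0));
    [|exact Hw].
  intro w'; destruct (excluded_middle_informative _); [apply Hnn|lra].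
Qed.

Lemma push_support t v : push t v <> 0 -> exists w, t w <> 0 /\ f w = v.
Proof.
  intro Hv; destruct (lsum_nz _ _ Hv) as [w [_ Hw]].
  destruct (excluded_middle_informative (f w = v)); [eauto|contradiction].
Qed.

Lemma push_mass t : (forall w, t w <> 0 -> lesnick_vertex n s k Y w) ->
  lsum (push t) L = lsum t L.
Proof.
  intro Hlv; unfold push; rewrite lsum_swap; apply lsum_ext_in; intros w _.
  destruct (Req_dec (t w) 0) as [E|E].
  - rewrite E; apply lsum_zero; intros v _; destruct (excluded_middle_informative _); auto.
  - apply lsum_indicator; [exact L_nodup|].
    apply L_spec, XY; destruct (f_near w (Hlv w E)) as [_ [Hx _]]; exact Hx.
Qed.

Lemma push_diff t t' v :
  Rabs (push t v - push t' v) <= lsum (fun w => Rabs (t w - t' w)) L.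
Proof.
  unfold push; rewrite <- (Rmult_1_l (lsum _ L)) at 1.
  replace (1 * _ - _) with
    (lsum (fun w => 1 * (if excluded_middle_informative (f w = v) then t w else 0)
                  + (-1) * (if excluded_middle_informative (f w = v) then t' w else 0)) L)
    by (rewrite lsum_lin; ring).
  eapply Rle_trans; [apply lsum_abs|]; apply lsum_le; intros w _.
  destruct (excluded_middle_informative _).
  - right; f_equal; ring.
  - replace (1 * 0 + -1 * 0) with 0 by ring; rewrite Rabs_R0; apply Rabs_pos.
Qed.

Lemma slh_0 t : slh 0 t = t.
Proof. apply functional_extensionality; intro v; unfold slh; ring. Qed.

Lemma slh_1 t : slh 1 t = push t.
Proof. apply functional_extensionality; intro v; unfold slh; ring. Qed.

Lemma slh_support u t v : slh u t v <> 0 ->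
  (u <> 1 /\ t v <> 0) \/ (exists w, u <> 0 /\ t w <> 0 /\ f w = v).
Proof.
  unfold slh; intro Hv; destruct (Req_dec ((1 - u) * t v) 0) as [E1|E1].
  - right; assert (E2 : u * push t v <> 0) by lra.
    destruct (push_support t v) as [w [Hw <-]].
    + intro E; apply E2; rewrite E; ring.
    + exists w; split; [intro E; apply E2; rewrite E; ring|auto].
  - left; split; intro E; apply E1; rewrite E; ring.
Qed.

(** Along the homotopy, weights stay on Lesnick vertices whenever the old
    vertices (before time 1) and their images (after time 0) are Lesnick
    vertices of [W]; the diameter bound survives because every new vertex lies
    within [r] of an old one and the gap forbids distances in (s, s + 2r). *)
Lemma slh_realization (Z W : point n -> Prop) u t :
  (forall v, Z v -> Y v) -> (forall v, W v -> Y v) -> 0 <= u <= 1 ->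
  realization n (lesnick n s k Z) t ->
  (forall v, u <> 1 -> t v <> 0 -> lesnick_vertex n s k W v) ->
  (forall w, u <> 0 -> t w <> 0 -> lesnick_vertex n s k W (f w)) ->
  realization n (lesnick n s k W) (slh u t).
Proof.
  intros ZY WY Hu Ht Hstay Hmove.
  assert (ZL : forall v, Z v -> In v L) by (intros v Hv; apply L_spec, ZY, Hv).
  assert (WL : forall v, W v -> In v L) by (intros v Hv; apply L_spec, WY, Hv).
  destruct (realization_lesnick_elim n s k Z L L_nodup ZL t Ht)
    as (Tnn & Tlv & Tdiam & [x0 Hx0] & Tmass).
  assert (TlvY : forall w, t w <> 0 -> lesnick_vertex n s k Y w)
    by (intros w Hw; apply lesnick_vertex_mono with Z; auto).
  assert (Hsupp : forall v, slh u t v <> 0 ->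
            lesnick_vertex n s k W v /\ exists w, t w <> 0 /\ dist n w v < r).
  { intros v Hv; destruct (slh_support u t v Hv) as [[Hu1 Htv]|[w [Hu0 [Htw <-]]]].
    - split; auto; exists v; split; auto; rewrite dist_refl; lra.
    - split; auto; exists w; split; auto; apply (f_near w (TlvY w Htw)). }
  apply (realization_lesnick_intro n s k W L L_nodup WL).
  - intro v; unfold slh; pose proof (Tnn v); pose proof (push_nonneg t v Tnn); nra.
  - intros v Hv; apply (Hsupp v Hv).
  - intros a b Ha Hb.
    destruct (Hsupp a Ha) as [[Wa _] [wa [Hwa Hda]]].
    destruct (Hsupp b Hb) as [[Wb _] [wb [Hwb Hdb]]].
    apply gap; auto.
    pose proof (dist_triangle n a wa b); pose proof (dist_triangle n wa wb b).
    pose proof (Tdiam wa wb Hwa Hwb); rewrite dist_sym in Hda; lra.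
  - pose proof (Tnn x0) as Hx0nn; pose proof (push_nonneg t x0 Tnn).
    destruct (Req_dec u 1) as [->|Hu1].
    + exists (f x0); rewrite slh_1.
      pose proof (push_ge t x0 Tnn (ZL x0 (proj1 (Tlv x0 Hx0)))); lra.
    + exists x0; unfold slh.
      assert (0 < (1 - u) * t x0) by (apply Rmult_lt_0_compat; lra); nra.
  - unfold slh; rewrite lsum_lin, push_mass, Tmass; [ring|exact TlvY].
Qed.

Lemma slh_lipschitz u u' t t' : 0 <= u <= 1 -> 0 <= u' <= 1 ->
  realization n (lesnick n s k Y) t -> realization n (lesnick n s k Y) t' ->
  bdist n lY (slh u t) (slh u' t')
    <= (1 + 2 * INR (length lY)) * (Rabs (u - u') + bdist n lY t t').
Proof.
  intros Hu Hu' Ht Ht'.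
  assert (YL : forall v, Y v -> In v L) by (intros v Hv; apply L_spec, Hv).
  destruct (realization_lesnick_elim n s k Y L L_nodup YL t Ht) as (Tnn & _).
  destruct (realization_lesnick_elim n s k Y L L_nodup YL t' Ht')
    as (Tnn' & Tlv' & _ & _ & Tmass').
  set (D := lsum (fun w => Rabs (t w - t' w)) L).
  assert (HD : D <= bdist n lY t t').
  { apply lsum_le_cover; auto; [intro; apply Rabs_pos|].
    intros v Hv _; apply lY_spec, L_spec, Hv. }
  assert (Ht'1 : forall v, 0 <= t' v <= 1).
  { intro v; split; [apply Tnn'|]; destruct (Req_dec (t' v) 0) as [E|E]; [lra|].
    rewrite <- Tmass'; apply lsum_term; auto; apply YL, (Tlv' v E). }
  assert (Hpush'1 : forall v, 0 <= push t' v <= 1).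
  { intro v; split; [apply push_nonneg, Tnn'|rewrite <- Tmass'; apply push_le_mass, Tnn']. }
  assert (Hpoint : forall v, Rabs (slh u t v - slh u' t' v)
            <= 1 * Rabs (t v - t' v) + 1 * (D + 2 * Rabs (u - u'))).
  { intro v; unfold slh; eapply Rle_trans;
      [apply (convex_comb_diff _ _ _ _ u u' Hu Hu' (Ht'1 v) (Hpush'1 v))|].
    pose proof (push_diff t t' v); fold D in H; lra. }
  unfold bdist at 1; eapply Rle_trans; [apply lsum_le; intros v _; apply Hpoint|].
  rewrite lsum_lin.
  pose proof (lsum_const_bound (fun _ : point n => D + 2 * Rabs (u - u')) lY _
                (fun _ _ => Rle_refl _)).
  change (lsum (fun v => Rabs (t v - t' v)) lY) with (bdist n lY t t') in *.
  pose proof (pos_INR (length lY)); pose proof (Rabs_pos (u - u')).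
  assert (INR (length lY) * D <= INR (length lY) * bdist n lY t t')
    by (apply Rmult_le_compat_l; auto).
  assert (0 <= bdist n lY t t') by (apply lsum_nonneg; intro; apply Rabs_pos).
  assert (0 <= INR (length lY) * bdist n lY t t') by (apply Rmult_le_pos; auto).
  assert (0 <= INR (length lY) * Rabs (u - u')) by (apply Rmult_le_pos; auto).
  lra.
Qed.

(** On the realization of L(Z), for X ⊆ Z ⊆ Y, [slh] is a homotopy from the
    identity to [push]: old vertices are in Z and new ones in X. *)
Lemma slh_homotopy (Z : point n -> Prop) :
  (forall x, X x -> Z x) -> (forall v, Z v -> Y v) ->
  homotopy_on n lY (realization n (lesnick n s k Z)) slh.
Proof.
  intros XZ ZY.
  assert (ZL : forall v, Z v -> In v L) by (intros v Hv; apply L_spec, ZY, Hv).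
  split.
  - intros u t Hu Ht.
    destruct (realization_lesnick_elim n s k Z L L_nodup ZL t Ht) as (_ & Tlv & _).
    apply (slh_realization Z Z); auto.
    intros w _ Hw; apply lesnick_vertex_mono with X; auto.
    apply f_near, lesnick_vertex_mono with Z; auto.
  - intros u t Hu Ht eps Heps.
    set (C := 1 + 2 * INR (length lY)).
    assert (Cpos : 0 < C) by (pose proof (pos_INR (length lY)); unfold C; lra).
    exists (eps / C); split; [apply Rdiv_lt_0_compat; lra|].
    intros u' t' Hu' Ht' Hclose.
    assert (ZYreal : forall t, realization n (lesnick n s k Z) t ->
                               realization n (lesnick n s k Y) t)
      by (intro; apply realization_mono; intro; apply lesnick_mono; exact ZY).
    eapply Rle_lt_trans; [apply slh_lipschitz; auto|].
    apply (Rmult_lt_compat_l C) in Hclose; [|exact Cpos].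
    replace (C * (eps / C)) with eps in Hclose by (field; lra); exact Hclose.
Qed.

Lemma push_realization t :
  realization n (lesnick n s k Y) t -> realization n (lesnick n s k X) (push t).
Proof.
  intro Ht; rewrite <- slh_1.
  assert (YL : forall v, Y v -> In v L) by (intros v Hv; apply L_spec, Hv).
  destruct (realization_lesnick_elim n s k Y L L_nodup YL t Ht) as (_ & Tlv & _).
  apply (slh_realization Y X); auto; [lra|intros v U; lra|].
  intros w _ Hw; apply f_near, Tlv, Hw.
Qed.

Lemma push_continuous : cont_on n lY (realization n (lesnick n s k Y)) push.
Proof.
  intros t Ht eps Heps.
  destruct (proj2 (slh_homotopy Y XY (fun v Hv => Hv)) 1 t ltac:(lra) Ht eps Heps)
    as [del [Hdel Hcont]].
  exists del; split; [exact Hdel|]; intros t' Ht' Hclose; rewrite <- !slh_1.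
  apply Hcont; auto; [lra|]; replace (1 - 1) with 0 by ring; rewrite Rabs_R0; lra.
Qed.

Theorem lesnick_inclusion_weak_he :
  weak_he_incl n lY (lesnick n s k X) (lesnick n s k Y).
Proof.
  split; [intro t; apply realization_mono; intro; apply lesnick_mono, XY|].
  exists push; split; [exact push_realization|]; split; [exact push_continuous|].
  split.
  - exists slh; split; [apply slh_homotopy; auto|].
    intros t _; split; [apply slh_0|apply slh_1].
  - exists slh; split; [apply slh_homotopy; auto|].
    intros t _; split; [apply slh_0|apply slh_1].
Qed.
End StraightLineHomotopy.

Theorem corollary4 (n k : nat) (X Y : point n -> Prop) (lY : list (point n))
  (r : R) (m : nat) (s : nat -> R) (i : nat) :
  (forall y, Y y <-> In y lY) ->
  finite_set X ->
  (forall x, X x -> Y x) ->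
  r > 0 ->
  dense_dis n k X Y r ->
  phase_change n Y m s ->
  (i < m)%nat ->
  2 * r < s (S i) - s i ->
  weak_he_incl n lY (lesnick n (s i) k X) (lesnick n (s i) k Y).
Proof.
  intros HlY _ HXY Hr Hdense Hphase Him Hwide.
  assert (Hgap : distance_gap n Y (s i) (2 * r))
    by (apply (phase_change_gap n Y m); auto; lra).
  destruct (choice (fun y x => lesnick_vertex n (s i) k Y y ->
                      dist n y x < r /\ lesnick_vertex n (s i) k X x)) as [f Hf].
  { intro y; destruct (classic (lesnick_vertex n (s i) k Y y)) as [Hy|Hy].
    - destruct (lesnick_vertex_approx n k X Y r (s i) y HXY Hdense Hgap Hy) as [x Hx].
      exists x; auto.
    - exists y; intro; contradiction. }
  set (L := nodup (fun a b : point n => excluded_middle_informative (a = b)) lY).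
  assert (HL : forall y, Y y <-> In y L) by (intro y; unfold L; rewrite nodup_In; apply HlY).
  exact (lesnick_inclusion_weak_he n k X Y lY L r (s i) f HlY (NoDup_nodup _ _) HL HXY Hr Hgap Hf).
Qed.
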